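(* Let $-\infty\le a<\infty$ and let $s$ be a positive, twice differentiable function on $(a,\infty)$ such that $b=-\log s$ is convex. Suppose the Laplace transform $L(\lambda)=e^{k(\lambda)}=\int_a^\infty e^{-\lambda x}s(x)\,dx$ is finite on a nonempty open interval $\Lambda$. Let $\lambda_1<\lambda_2$ be in $\Lambda$, $p\in(0,1)$, and set $$p_1=pe^{-k(\lambda_1)},\quad p_2=(1-p)e^{-k(\lambda_2)},\quad c=\frac{\lambda_2-\lambda_1}{2},\quad d=\log\sqrt{p_1/p_2}.$$ Assume that for all $x>a$ we have $b''(x)>0$ and $$\frac{c}{\sqrt{b''(x)}}\le\cosh(cx+d).$$ Then the probability density on $(a,\infty)$ $$f(x)=\left(pe^{-\lambda_1x-k(\lambda_1)}+(1-p)e^{-\lambda_2x-k(\lambda_2)}\right)s(x)$$ has a nondecreasing hazard rate $x\mapsto f(x)/\int_x^\infty f(t)\,dt$ on $(a,\infty)$.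
   Context: The hazard rate of a probability density $f$ on $(a,\infty)$ is $h(x)=f(x)/\int_x^\infty f(t)\,dt$. *)

From Stdlib Require Import Reals Lra.
Open Scope R_scope.

Inductive lbound : Type := NegInf | Fin (a : R).

Definition above (a : lbound) (x : R) : Prop :=
  match a with NegInf => True | Fin a0 => a0 < x end.

Definition improper_int (a : lbound) (g : R -> R) (l : R) : Prop :=
  (forall u v, above a u -> u <= v -> inhabited (Riemann_integrable g u v)) /\
  (forall eps, 0 < eps -> exists u0 v0, above a u0 /\
     forall u v (pr : Riemann_integrable g u v),
       above a u -> u <= u0 -> v0 <= v -> Rabs (RiemannInt pr - l) < eps).

Definition convex_on (a : lbound) (g : R -> R) : Prop :=
  forall x y t, above a x -> above a y -> 0 <= t <= 1 ->
    g (t * x + (1 - t) * y) <= t * g x + (1 - t) * g y.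

Definition nonempty_open_interval (L : R -> Prop) : Prop :=
  (exists x, L x) /\
  (forall x y z, L x -> L y -> x <= z <= y -> L z) /\
  (forall x, L x -> exists eps, 0 < eps /\ forall y, Rabs (y - x) < eps -> L y).

(* Writing p1 = p e^{-k(l1)}, p2 = (1-p) e^{-k(l2)} and c = (l2-l1)/2, the exponential
   mixture q(x) = p1 e^{-l1 x} + p2 e^{-l2 x} factors as
   2 sqrt(p1 p2) e^{-(l1+l2)x/2} cosh(cx+d), so (ln q)'' = c^2 / cosh^2(cx+d).  The
   hypothesis says exactly that this is at most b'', hence ln f = ln q - b is concave.
   A log-concave density has a nondecreasing hazard rate: comparing the translate
   f(x + t) with f(y + t) for x <= y gives f(x) int_y^V f <= f(y) int_x^V f, and
   letting V -> oo yields f(x) / int_x^oo f <= f(y) / int_y^oo f. *)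
From Stdlib Require Import Reals Lra FunctionalExtensionality Classical_Prop.
Open Scope R_scope.

Lemma derivable_pt_lim_ext (f g : R -> R) x l l' :
  (forall y, f y = g y) -> l = l' -> derivable_pt_lim f x l -> derivable_pt_lim g x l'.
Proof.
  intros Hfg <- Hf. replace g with f; [exact Hf|]. apply functional_extensionality; auto.
Qed.

Lemma derivable_pt_lim_shift (F : R -> R) d t l :
  derivable_pt_lim F (t + d) l -> derivable_pt_lim (fun z => F (z + d)) t l.
Proof.
  intro HF. apply (derivable_pt_lim_ext (comp F (fun z => z + d)) _ t (l * 1));
    [reflexivity|ring|].
  apply derivable_pt_lim_comp; auto.
  apply (derivable_pt_lim_ext (id + fct_cte d)%F _ t (1 + 0)); [reflexivity|ring|].
  apply derivable_pt_lim_plus; [apply derivable_pt_lim_id|apply derivable_pt_lim_const].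
Qed.

Lemma derivable_pt_lim_scal_exp c l t :
  derivable_pt_lim (fun y => c * exp (l * y)) t (l * c * exp (l * t)).
Proof.
  apply (derivable_pt_lim_ext (mult_real_fct c (comp exp (mult_real_fct l id))) _ t
           (c * (exp (l * t) * (l * 1)))); [reflexivity|ring|].
  apply derivable_pt_lim_scal, derivable_pt_lim_comp; [|apply derivable_pt_lim_exp].
  apply derivable_pt_lim_scal, derivable_pt_lim_id.
Qed.

Lemma nondecreasing_of_derive_nonneg (F F' : R -> R) x y : x <= y ->
  (forall c, x <= c <= y -> derivable_pt_lim F c (F' c)) ->
  (forall c, x <= c <= y -> 0 <= F' c) -> F x <= F y.
Proof.
  intros Hxy HD HP. destruct (Rle_lt_or_eq_dec _ _ Hxy) as [Hlt|<-]; [|lra].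
  destruct (MVT_cor2 F F' x y Hlt HD) as [c [Hc Hcxy]].
  assert (0 <= F' c * (y - x)) by (apply Rmult_le_pos; [apply HP|]; lra). lra.
Qed.

Lemma nonincreasing_of_derive_nonpos (F F' : R -> R) x y : x <= y ->
  (forall c, x <= c <= y -> derivable_pt_lim F c (F' c)) ->
  (forall c, x <= c <= y -> F' c <= 0) -> F y <= F x.
Proof.
  intros Hxy HD HP.
  enough (- F x <= - F y) by lra.
  apply (nondecreasing_of_derive_nonneg (- F)%F (- F')%F); auto.
  - intros c Hc. apply derivable_pt_lim_opp; auto.
  - intros c Hc. specialize (HP c Hc). unfold opp_fct. lra.
Qed.

Lemma increasing_of_derive_pos (F F' : R -> R) x y : x < y ->
  (forall c, x <= c <= y -> derivable_pt_lim F c (F' c)) ->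
  (forall c, x <= c <= y -> 0 < F' c) -> F x < F y.
Proof.
  intros Hxy HD HP. destruct (MVT_cor2 F F' x y Hxy HD) as [c [Hc Hcxy]].
  assert (0 < F' c * (y - x)) by (apply Rmult_lt_0_compat; [apply HP|]; lra). lra.
Qed.

Lemma Rmax_continuous x0 t : continuity_pt (Rmax x0) t.
Proof.
  intros eps Heps. exists eps. split; auto. intros z [_ Hz]. simpl in *. unfold Rdist in *.
  unfold Rmax; destruct (Rle_dec x0 z), (Rle_dec x0 t); split_Rabs; lra.
Qed.

Lemma continuity_pt_eps f x : continuity_pt f x -> forall eps, 0 < eps ->
  exists del, 0 < del /\ forall z, Rabs (z - x) < del -> Rabs (f z - f x) < eps.
Proof.
  intros Hc eps Heps. destruct (Hc eps Heps) as [del [Hdel H]]. exists del; split; auto.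
  intros z Hz. destruct (Req_dec z x) as [->|Hzx].
  - rewrite Rminus_diag, Rabs_R0; auto.
  - apply (H z). repeat split; auto.
Qed.

Definition tends_to_at_top (g : R -> R) (l : R) : Prop :=
  forall eps, 0 < eps -> exists M, forall V, M <= V -> Rabs (g V - l) < eps.

Lemma tends_to_at_top_const m : tends_to_at_top (fun _ => m) m.
Proof. intros eps Heps. exists 0. intros V _. rewrite Rminus_diag, Rabs_R0; auto. Qed.

Lemma tends_to_at_top_scal g l c :
  tends_to_at_top g l -> tends_to_at_top (fun V => c * g V) (c * l).
Proof.
  intros Hg eps Heps.
  assert (Hc : 0 < Rabs c + 1) by (pose proof (Rabs_pos c); lra).
  destruct (Hg (eps / (Rabs c + 1))) as [M HM]; [apply Rdiv_lt_0_compat; lra|].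
  exists M. intros V HV. specialize (HM V HV).
  rewrite <- Rmult_minus_distr_l, Rabs_mult.
  apply (Rmult_lt_compat_l (Rabs c + 1)) in HM; [|lra].
  replace ((Rabs c + 1) * (eps / (Rabs c + 1))) with eps in HM by (field; lra).
  pose proof (Rabs_pos (g V - l)). nra.
Qed.

Lemma tends_to_at_top_le g1 g2 l1 l2 M :
  tends_to_at_top g1 l1 -> tends_to_at_top g2 l2 ->
  (forall V, M <= V -> g1 V <= g2 V) -> l1 <= l2.
Proof.
  intros H1 H2 Hle. destruct (Rle_lt_dec l1 l2) as [|Hlt]; auto. exfalso.
  destruct (H1 ((l1 - l2) / 2)) as [M1 HM1]; [lra|].
  destruct (H2 ((l1 - l2) / 2)) as [M2 HM2]; [lra|].
  set (V := Rmax M (Rmax M1 M2)).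
  assert (M <= V /\ M1 <= V /\ M2 <= V) as (HM & HV1 & HV2).
  { unfold V. pose proof (Rmax_l M (Rmax M1 M2)). pose proof (Rmax_r M (Rmax M1 M2)).
    pose proof (Rmax_l M1 M2). pose proof (Rmax_r M1 M2). lra. }
  specialize (HM1 V HV1). specialize (HM2 V HV2). specialize (Hle V HM).
  revert HM1 HM2. split_Rabs; lra.
Qed.

Lemma above_le a x t : above a x -> x <= t -> above a t.
Proof. destruct a; simpl; lra. Qed.

Lemma above_Rmin a u v : above a u -> above a v -> above a (Rmin u v).
Proof. unfold Rmin. destruct (Rle_dec u v); auto. Qed.

Lemma RiemannInt_scal (g : R -> R) c u v (pr : Riemann_integrable g u v)
  (prc : Riemann_integrable (fun t => c * g t) u v) :
  u <= v -> RiemannInt prc = c * RiemannInt pr.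
Proof.
  intros Huv.
  pose (pr0 := RiemannInt_P14 u v 0).
  pose (pr0c := RiemannInt_P10 c pr0 pr).
  rewrite (RiemannInt_P18 prc pr0c Huv); [|intros; unfold fct_cte; ring].
  rewrite (RiemannInt_P13 pr0 pr pr0c), (RiemannInt_P15 pr0). ring.
Qed.

Lemma improper_int_lincomb a (g1 g2 : R -> R) l1 l2 c1 c2 :
  improper_int a g1 l1 -> improper_int a g2 l2 ->
  improper_int a (fun t => c1 * g1 t + c2 * g2 t) (c1 * l1 + c2 * l2).
Proof.
  intros [Hi1 H1] [Hi2 H2]. split.
  - intros u v Hu Huv. destruct (Hi1 u v Hu Huv) as [pr1]. destruct (Hi2 u v Hu Huv) as [pr2].
    constructor. exact (RiemannInt_P10 c2 (Riemann_integrable_scal c1 pr1) pr2).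
  - intros eps Heps.
    set (e := eps / (2 * (Rabs c1 + Rabs c2 + 1))).
    assert (He : 0 < e).
    { unfold e. pose proof (Rabs_pos c1). pose proof (Rabs_pos c2).
      apply Rdiv_lt_0_compat; lra. }
    destruct (H1 e He) as [u1 [v1 [Hu1 HI1]]]. destruct (H2 e He) as [u2 [v2 [Hu2 HI2]]].
    set (u0 := Rmin u1 u2). set (v0 := Rmax u0 (Rmax v1 v2)).
    exists u0, v0. split; [apply above_Rmin; auto|].
    intros u v pr Hu Huu0 Hv0v.
    assert (u0 <= u1 /\ u0 <= u2) as [Hu01 Hu02] by (split; [apply Rmin_l|apply Rmin_r]).
    assert (u0 <= v0 /\ v1 <= v0 /\ v2 <= v0) as (Huv0 & Hv1 & Hv2).
    { unfold v0. pose proof (Rmax_l u0 (Rmax v1 v2)). pose proof (Rmax_r u0 (Rmax v1 v2)).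
      pose proof (Rmax_l v1 v2). pose proof (Rmax_r v1 v2). lra. }
    destruct (Hi1 u v Hu ltac:(lra)) as [pr1]. destruct (Hi2 u v Hu ltac:(lra)) as [pr2].
    specialize (HI1 u v pr1 Hu ltac:(lra) ltac:(lra)).
    specialize (HI2 u v pr2 Hu ltac:(lra) ltac:(lra)).
    pose (pr1c := Riemann_integrable_scal c1 pr1).
    rewrite (RiemannInt_P13 pr1c pr2 pr), (RiemannInt_scal g1 c1 u v pr1 pr1c) by lra.
    replace (c1 * RiemannInt pr1 + c2 * RiemannInt pr2 - (c1 * l1 + c2 * l2))
      with (c1 * (RiemannInt pr1 - l1) + c2 * (RiemannInt pr2 - l2)) by ring.
    eapply Rle_lt_trans; [apply Rabs_triang|]. rewrite !Rabs_mult.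
    assert (Rabs c1 * Rabs (RiemannInt pr1 - l1) <= Rabs c1 * e)
      by (apply Rmult_le_compat_l; [apply Rabs_pos|lra]).
    assert (Rabs c2 * Rabs (RiemannInt pr2 - l2) <= Rabs c2 * e)
      by (apply Rmult_le_compat_l; [apply Rabs_pos|lra]).
    assert (Hbound : (Rabs c1 + Rabs c2) * e < eps).
    { assert (Hhalf : (Rabs c1 + Rabs c2 + 1) * e = eps / 2).
      { unfold e. field. pose proof (Rabs_pos c1). pose proof (Rabs_pos c2). lra. }
      nra. }
    lra.
Qed.

Definition integrable_of_continuous (G : R -> R) (HG : forall t, continuity_pt G t) (u v : R) :
  Riemann_integrable G u v :=
  match Rle_dec u v with
  | left Huv => continuity_implies_RiemannInt Huv (fun t _ => HG t)
  | right Hvu => RiemannInt_P1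
      (continuity_implies_RiemannInt (Rlt_le _ _ (Rnot_le_lt _ _ Hvu)) (fun t _ => HG t))
  end.

(* For positive h this is concavity of ln h, phrased through increments. *)
Definition log_concave_on (a : lbound) (h : R -> R) : Prop :=
  forall x y z, above a x -> x <= y -> x <= z -> h x * h (z + (y - x)) <= h y * h z.

Section TailIntegrals.

Variables (a : lbound) (h : R -> R) (x0 : R).
Hypothesis h_cont : forall t, above a t -> continuity_pt h t.
Hypothesis h_pos : forall t, above a t -> 0 < h t.
Hypothesis x0_above : above a x0.

(* Freezing h to the left of x0 gives an everywhere continuous integrand, so the
   primitive below needs no integrability side conditions. *)
Let h_frozen (t : R) : R := h (Rmax x0 t).

Lemma h_frozen_continuous t : continuity_pt h_frozen t.
Proof.
  apply (continuity_pt_comp (Rmax x0) h); [apply Rmax_continuous|].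
  apply h_cont, (above_le a x0); [exact x0_above|apply Rmax_l].
Qed.

Lemma h_frozen_pos t : 0 < h_frozen t.
Proof. apply h_pos, (above_le a x0); [exact x0_above|apply Rmax_l]. Qed.

Definition tail_prim (v : R) : R :=
  RiemannInt (integrable_of_continuous h_frozen h_frozen_continuous x0 v).

Lemma tail_prim_x0 : tail_prim x0 = 0.
Proof. apply RiemannInt_P9. Qed.

Lemma RiemannInt_frozen u v (pr : Riemann_integrable h_frozen u v) :
  RiemannInt pr = tail_prim v - tail_prim u.
Proof.
  unfold tail_prim.
  pose proof (RiemannInt_P26 (integrable_of_continuous _ h_frozen_continuous x0 u) pr
                (integrable_of_continuous _ h_frozen_continuous x0 v)).
  lra.
Qed.

Lemma tail_prim_derive v : derivable_pt_lim tail_prim v (h_frozen v).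
Proof.
  assert (Hv : v - 1 <= v + 1) by lra.
  pose (C0 := fun t (_ : v - 1 <= t <= v + 1) => h_frozen_continuous t).
  pose proof (derivable_pt_lim_plus (fct_cte (tail_prim (v - 1))) (primitive Hv (FTC_P1 Hv C0))
                v _ _ (derivable_pt_lim_const _ v) (@RiemannInt_P28 _ _ _ v Hv C0 ltac:(lra))) as HD.
  replace (h_frozen v) with (0 + h_frozen v) by ring.
  apply (derivable_pt_lim_locally_ext _ tail_prim v (v - 1) (v + 1) _ ltac:(lra)) in HD;
    [exact HD|].
  intros z Hz. unfold plus_fct, fct_cte, primitive.
  destruct (Rle_dec (v - 1) z); [|lra]. destruct (Rle_dec z (v + 1)); [|lra].
  rewrite RiemannInt_frozen. ring.
Qed.

Lemma tail_prim_continuous v : continuity_pt tail_prim v.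
Proof. apply derivable_continuous_pt. exists (h_frozen v). apply tail_prim_derive. Qed.

Lemma RiemannInt_tail_prim u v (pr : Riemann_integrable h u v) :
  x0 <= u -> u <= v -> RiemannInt pr = tail_prim v - tail_prim u.
Proof.
  intros Hu Huv.
  rewrite <- (RiemannInt_frozen u v (integrable_of_continuous _ h_frozen_continuous u v)).
  apply RiemannInt_P18; auto. intros t Ht. unfold h_frozen. rewrite Rmax_right; lra.
Qed.

Lemma tail_prim_increasing u v : u < v -> tail_prim u < tail_prim v.
Proof.
  intros Huv. apply (increasing_of_derive_pos _ h_frozen); auto.
  - intros c _. apply tail_prim_derive.
  - intros c _. apply h_frozen_pos.
Qed.

Lemma tail_prim_le u v : u <= v -> tail_prim u <= tail_prim v.
Proof.
  intros Huv. destruct (Rle_lt_or_eq_dec _ _ Huv) as [Hlt|<-]; [|lra].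
  apply Rlt_le, tail_prim_increasing; auto.
Qed.

Lemma tail_prim_tends x T : x0 <= x -> improper_int (Fin x) h T ->
  tends_to_at_top (fun V => tail_prim V - tail_prim x) T.
Proof.
  intros Hx [_ HI] eps Heps.
  destruct (HI (eps / 2) ltac:(lra)) as [u0 [v0 [Hu0 H]]]. simpl in Hu0.
  destruct (continuity_pt_eps _ _ (tail_prim_continuous x) (eps / 2) ltac:(lra))
    as [del [Hdel Hcont]].
  set (u := Rmin u0 (x + del / 2)).
  assert (Hu : x < u /\ u <= u0 /\ u <= x + del / 2).
  { unfold u, Rmin. destruct (Rle_dec u0 (x + del / 2)); lra. }
  exists (Rmax v0 u0). intros V HV.
  assert (HV' : v0 <= V /\ u0 <= V).
  { pose proof (Rmax_l v0 u0). pose proof (Rmax_r v0 u0). lra. }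
  assert (Hc : forall t, u <= t <= V -> continuity_pt h t).
  { intros t Ht. apply h_cont, (above_le a x0); [exact x0_above|lra]. }
  pose (pr := continuity_implies_RiemannInt (ltac:(lra) : u <= V) Hc).
  specialize (H u V pr ltac:(simpl; lra) ltac:(lra) ltac:(lra)).
  rewrite (RiemannInt_tail_prim u V pr) in H by lra.
  specialize (Hcont u ltac:(rewrite Rabs_pos_eq; lra)).
  revert H Hcont. split_Rabs; lra.
Qed.

Lemma improper_int_tail_pos x T : x0 <= x -> improper_int (Fin x) h T -> 0 < T.
Proof.
  intros Hx HT.
  assert (Hgap : tail_prim (x + 1) - tail_prim x <= T).
  { apply (tends_to_at_top_le _ _ _ _ (x + 1) (tends_to_at_top_const _)
             (tail_prim_tends x T Hx HT)).
    intros V HV. pose proof (tail_prim_le (x + 1) V HV). lra. }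
  pose proof (tail_prim_increasing x (x + 1) ltac:(lra)). lra.
Qed.

Lemma tail_prim_bounded L : improper_int a h L -> forall V, x0 <= V -> tail_prim V <= L + 1.
Proof.
  intros [_ HI] V HV. destruct (HI 1 ltac:(lra)) as [u0 [v0 [Hu0 H]]].
  set (u := Rmin u0 x0). set (v := Rmax v0 V).
  assert (Hu : above a u) by (apply above_Rmin; auto).
  assert (u <= x0 /\ u <= u0) as [Hux0 Huu0] by (split; [apply Rmin_r|apply Rmin_l]).
  assert (V <= v /\ v0 <= v) as [HVv Hv0v] by (split; [apply Rmax_r|apply Rmax_l]).
  assert (Hc : forall t, u <= t -> continuity_pt h t)
    by (intros t Ht; apply h_cont, (above_le a u); auto).
  pose (pr := continuity_implies_RiemannInt (ltac:(lra) : u <= v)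
                (fun t Ht => Hc t (proj1 Ht))).
  pose (pr1 := continuity_implies_RiemannInt Hux0 (fun t Ht => Hc t (proj1 Ht))).
  pose (pr2 := continuity_implies_RiemannInt (ltac:(lra) : x0 <= v)
                 (fun t Ht => Hc t ltac:(lra))).
  specialize (H u v pr Hu Huu0 Hv0v).
  rewrite <- (RiemannInt_P26 pr1 pr2 pr), (RiemannInt_tail_prim x0 v pr2), tail_prim_x0
    in H by lra.
  assert (Hleft : 0 <= RiemannInt pr1).
  { pose proof (RiemannInt_P15 (RiemannInt_P14 u x0 0)).
    pose proof (RiemannInt_P19 (RiemannInt_P14 u x0 0) pr1 Hux0
      (fun t Ht => ltac:(unfold fct_cte; apply Rlt_le, h_pos, (above_le a u); auto; lra))).
    lra. }
  pose proof (tail_prim_le V v HVv).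
  revert H. split_Rabs; lra.
Qed.

Lemma improper_int_tail_of_bounded B :
  (forall V, x0 <= V -> tail_prim V <= B) -> exists l, improper_int (Fin x0) h l.
Proof.
  intros HB.
  set (E := fun r => exists V, x0 <= V /\ r = tail_prim V).
  destruct (completeness E) as [m [Hub Hlub]].
  { exists B. intros r [V [HV ->]]. auto. }
  { exists (tail_prim x0), x0. split; auto; lra. }
  exists m. split.
  - intros u v Hu Huv. constructor. apply continuity_implies_RiemannInt; auto.
    intros t Ht. apply h_cont, (above_le a x0); [exact x0_above|simpl in Hu; lra].
  - intros eps Heps.
    assert (HV1 : exists V1, x0 <= V1 /\ m - eps / 2 < tail_prim V1).
    { apply NNPP. intro Hno.
      enough (m <= m - eps / 2) by lra.
      apply Hlub. intros r [V [HV ->]].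
      destruct (Rle_lt_dec (tail_prim V) (m - eps / 2)) as [|Hlt]; auto.
      exfalso. apply Hno. exists V. auto. }
    destruct HV1 as [V1 [HV1 HmV1]].
    destruct (continuity_pt_eps _ _ (tail_prim_continuous x0) (eps / 2) ltac:(lra))
      as [del [Hdel Hcont]].
    exists (x0 + del / 2), (Rmax V1 (x0 + del / 2)). split; [simpl; lra|].
    intros u v pr Hu Huu0 Hv. simpl in Hu.
    assert (V1 <= v /\ x0 + del / 2 <= v) as [HV1v Hv'].
    { pose proof (Rmax_l V1 (x0 + del / 2)). pose proof (Rmax_r V1 (x0 + del / 2)). lra. }
    rewrite (RiemannInt_tail_prim u v pr) by lra.
    pose proof (tail_prim_le V1 v HV1v).
    assert (tail_prim v <= m) by (apply Hub; exists v; split; auto; lra).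
    specialize (Hcont u ltac:(rewrite Rabs_pos_eq; lra)). rewrite tail_prim_x0 in Hcont.
    revert Hcont. split_Rabs; lra.
Qed.

Lemma improper_int_tail L : improper_int a h L -> exists l, improper_int (Fin x0) h l.
Proof.
  intros HL. apply (improper_int_tail_of_bounded (L + 1)). apply tail_prim_bounded; auto.
Qed.

Hypothesis h_log_concave : log_concave_on a h.

(* Compare int_y^V h with the translate int_{x0}^{V + x0 - y} h, which is <= int_{x0}^V h. *)
Lemma tail_prim_compare y V : x0 <= y -> y <= V ->
  h x0 * (tail_prim V - tail_prim y) <= h y * (tail_prim V - tail_prim x0).
Proof.
  intros Hy HV.
  set (Phi := fun w => h y * (tail_prim (w + (x0 - y)) - tail_prim x0)
                       - h x0 * (tail_prim w - tail_prim y)).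
  assert (HPhi : Phi y <= Phi V).
  { apply (nondecreasing_of_derive_nonneg Phi
             (fun w => h y * h_frozen (w + (x0 - y)) - h x0 * h_frozen w)); auto.
    - intros c Hc.
      apply (derivable_pt_lim_ext
               (mult_real_fct (h y) ((fun w => tail_prim (w + (x0 - y))) - fct_cte (tail_prim x0))
                - mult_real_fct (h x0) (tail_prim - fct_cte (tail_prim y)))%F _ c
               (h y * (h_frozen (c + (x0 - y)) - 0) - h x0 * (h_frozen c - 0)));
        [reflexivity|ring|].
      apply derivable_pt_lim_minus; apply derivable_pt_lim_scal;
        apply derivable_pt_lim_minus; try apply derivable_pt_lim_const.
      + apply derivable_pt_lim_shift, tail_prim_derive.
      + apply tail_prim_derive.
    - intros c Hc. unfold h_frozen. rewrite !Rmax_right by lra.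
      pose proof (h_log_concave x0 y (c + (x0 - y)) x0_above Hy ltac:(lra)) as Hlc.
      replace (c + (x0 - y) + (y - x0)) with c in Hlc by ring. lra. }
  unfold Phi in HPhi. replace (y + (x0 - y)) with x0 in HPhi by ring.
  pose proof (tail_prim_le (V + (x0 - y)) V ltac:(lra)).
  pose proof (h_pos y (above_le a x0 y x0_above Hy)).
  assert (h y * (tail_prim (V + (x0 - y)) - tail_prim x0)
          <= h y * (tail_prim V - tail_prim x0)) by (apply Rmult_le_compat_l; lra).
  lra.
Qed.

Lemma hazard_rate_le (T : R -> R) :
  (forall x, above a x -> improper_int (Fin x) h (T x)) ->
  forall y, x0 <= y -> h x0 / T x0 <= h y / T y.
Proof.
  intros HT y Hy.
  assert (Hya : above a y) by (apply (above_le a x0); auto).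
  pose proof (improper_int_tail_pos x0 (T x0) ltac:(lra) (HT x0 x0_above)) as HTx.
  pose proof (improper_int_tail_pos y (T y) Hy (HT y Hya)) as HTy.
  assert (Hcross : h x0 * T y <= h y * T x0).
  { apply (tends_to_at_top_le _ _ _ _ y
             (tends_to_at_top_scal _ _ (h x0) (tail_prim_tends y (T y) Hy (HT y Hya)))
             (tends_to_at_top_scal _ _ (h y) (tail_prim_tends x0 (T x0) ltac:(lra)
                                                 (HT x0 x0_above)))).
    intros V HV. apply tail_prim_compare; auto. }
  pose proof (h_pos x0 x0_above).
  apply (Rmult_le_reg_r (T x0 * T y)); [apply Rmult_lt_0_compat; auto|].
  replace (h x0 / T x0 * (T x0 * T y)) with (h x0 * T y) by (field; lra).
  replace (h y / T y * (T x0 * T y)) with (h y * T x0) by (field; lra).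
  exact Hcross.
Qed.

End TailIntegrals.

Lemma log_concave_of_exp a (F ell ell' : R -> R) :
  (forall t, above a t -> F t = exp (ell t)) ->
  (forall t, above a t -> derivable_pt_lim ell t (ell' t)) ->
  (forall t1 t2, above a t1 -> t1 <= t2 -> ell' t2 <= ell' t1) ->
  log_concave_on a F.
Proof.
  intros HF Hd Hmono x y z Hx Hxy Hxz.
  assert (Habove : forall t, x <= t -> above a t) by (intros; apply (above_le a x); auto).
  set (del := y - x).
  assert (Hinc : ell (z + del) - ell z <= ell (x + del) - ell x).
  { apply (nonincreasing_of_derive_nonpos (fun w => ell (w + del) - ell w)
             (fun w => ell' (w + del) - ell' w)); auto.
    - intros c Hc.
      apply (derivable_pt_lim_ext (minus_fct (fun w => ell (w + del)) ell) _ c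
               (ell' (c + del) - ell' c)); [reflexivity|reflexivity|].
      apply derivable_pt_lim_minus; [apply derivable_pt_lim_shift|]; apply Hd, Habove;
        unfold del; lra.
    - intros c Hc. enough (ell' (c + del) <= ell' c) by lra.
      apply Hmono; [apply Habove|unfold del]; lra. }
  replace (x + del) with y in Hinc by (unfold del; ring).
  rewrite !HF by (apply Habove; unfold del; lra).
  rewrite <- !exp_plus.
  destruct (Rle_lt_or_eq_dec (ell x + ell (z + del)) (ell y + ell z) ltac:(lra)) as [Hlt|Heq];
    [apply Rlt_le, exp_increasing; exact Hlt|rewrite Heq; apply Rle_refl].
Qed.

Definition mix (p1 p2 lam1 lam2 t : R) : R := p1 * exp (- lam1 * t) + p2 * exp (- lam2 * t).

Lemma mix_pos p1 p2 lam1 lam2 t : 0 < p1 -> 0 < p2 -> 0 < mix p1 p2 lam1 lam2 t.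
Proof.
  intros Hp1 Hp2. unfold mix.
  pose proof (exp_pos (- lam1 * t)). pose proof (exp_pos (- lam2 * t)). nra.
Qed.

Lemma mix_derive p1 p2 lam1 lam2 t :
  derivable_pt_lim (mix p1 p2 lam1 lam2) t (mix (- lam1 * p1) (- lam2 * p2) lam1 lam2 t).
Proof.
  apply (derivable_pt_lim_ext
           (plus_fct (fun y => p1 * exp (- lam1 * y)) (fun y => p2 * exp (- lam2 * y))) _ t
           (- lam1 * p1 * exp (- lam1 * t) + - lam2 * p2 * exp (- lam2 * t)));
    [reflexivity|reflexivity|].
  apply derivable_pt_lim_plus; apply derivable_pt_lim_scal_exp.
Qed.

Lemma mix_cosh p1 p2 lam1 lam2 t : 0 < p1 -> 0 < p2 ->
  mix p1 p2 lam1 lam2 t = 2 * sqrt (p1 * p2) * exp (- ((lam1 + lam2) / 2) * t)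
                          * cosh ((lam2 - lam1) / 2 * t + ln (sqrt (p1 / p2))).
Proof.
  intros Hp1 Hp2.
  set (r := sqrt (p1 / p2)).
  assert (Hr : 0 < r) by (apply sqrt_lt_R0, Rdiv_lt_0_compat; auto).
  assert (Hrr : r * r = p1 / p2) by (apply sqrt_sqrt, Rlt_le, Rdiv_lt_0_compat; auto).
  assert (Hsq : sqrt (p1 * p2) = p2 * r).
  { rewrite <- (sqrt_Rsqr (p2 * r)) by nra. f_equal. unfold Rsqr.
    replace (p2 * r * (p2 * r)) with (p2 * p2 * (r * r)) by ring. rewrite Hrr. field; lra. }
  set (E := exp (- ((lam1 + lam2) / 2) * t)). set (F := exp ((lam2 - lam1) / 2 * t)).
  assert (HF : 0 < F) by apply exp_pos.
  assert (H1 : exp (- lam1 * t) = E * F) by (unfold E, F; rewrite <- exp_plus; f_equal; field).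
  assert (H2 : exp (- lam2 * t) = E * / F).
  { unfold E, F. rewrite <- exp_Ropp, <- exp_plus. f_equal. field. }
  unfold mix, cosh. rewrite H1, H2, Hsq, exp_Ropp, exp_plus, exp_ln by exact Hr. fold F.
  replace p1 with (p2 * (r * r)) by (rewrite Hrr; field; lra).
  field; lra.
Qed.

Lemma mix_log_curvature p1 p2 lam1 lam2 t : 0 < p1 -> 0 < p2 ->
  let c := (lam2 - lam1) / 2 in
  let d := ln (sqrt (p1 / p2)) in
  mix (- lam1 * (- lam1 * p1)) (- lam2 * (- lam2 * p2)) lam1 lam2 t * mix p1 p2 lam1 lam2 t
  - mix (- lam1 * p1) (- lam2 * p2) lam1 lam2 t * mix (- lam1 * p1) (- lam2 * p2) lam1 lam2 t
  = (c / cosh (c * t + d))² * (mix p1 p2 lam1 lam2 t)².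
Proof.
  intros Hp1 Hp2 c d.
  set (E := exp (- ((lam1 + lam2) / 2) * t)).
  assert (HEE : E * E = exp (- lam1 * t) * exp (- lam2 * t))
    by (unfold E; rewrite <- !exp_plus; f_equal; field).
  transitivity ((lam2 - lam1) * (lam2 - lam1) * (p1 * p2) * (E * E)).
  { rewrite HEE. unfold mix. ring. }
  rewrite (mix_cosh p1 p2 lam1 lam2 t Hp1 Hp2). fold c d E.
  assert (HC : 0 < cosh (c * t + d)).
  { unfold cosh. pose proof (exp_pos (c * t + d)). pose proof (exp_pos (- (c * t + d))). lra. }
  assert (Hs : sqrt (p1 * p2) * sqrt (p1 * p2) = p1 * p2)
    by (apply sqrt_sqrt; nra).
  set (S := sqrt (p1 * p2)) in *. rewrite <- Hs.
  set (C := cosh (c * t + d)) in *. unfold Rsqr, c. field. lra.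
Qed.

Lemma Rsqr_div_le_of_div_sqrt_le c B C :
  0 <= c -> 0 < B -> 0 < C -> c / sqrt B <= C -> (c / C)² <= B.
Proof.
  intros Hc HB HC Hle.
  assert (HsB : 0 < sqrt B) by (apply sqrt_lt_R0; auto).
  rewrite <- (Rsqr_sqrt B) at 1 by lra.
  apply Rsqr_incr_1; [|apply Rmult_le_pos, Rlt_le, Rinv_0_lt_compat; lra|lra].
  apply (Rmult_le_reg_r C); [auto|]. apply (Rmult_le_compat_r (sqrt B)) in Hle; [|lra].
  replace (c / sqrt B * sqrt B) with c in Hle by (field; lra).
  replace (c / C * C) with c by (field; lra). lra.
Qed.

Lemma mix_mul_log_concave a (s b1 b2 : R -> R) p1 p2 lam1 lam2 :
  0 < p1 -> 0 < p2 -> lam1 <= lam2 ->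
  (forall x, above a x -> 0 < s x) ->
  (forall x, above a x -> derivable_pt_lim (fun y => - ln (s y)) x (b1 x)) ->
  (forall x, above a x -> derivable_pt_lim b1 x (b2 x)) ->
  (forall x, above a x ->
     0 < b2 x /\
     let c := (lam2 - lam1) / 2 in
     let d := ln (sqrt (p1 / p2)) in
     c / sqrt (b2 x) <= cosh (c * x + d)) ->
  log_concave_on a (fun t => mix p1 p2 lam1 lam2 t * s t).
Proof.
  intros Hp1 Hp2 Hl12 Hspos Hb1 Hb2 Hcond.
  set (q := mix p1 p2 lam1 lam2).
  set (q' := mix (- lam1 * p1) (- lam2 * p2) lam1 lam2).
  set (q'' := mix (- lam1 * (- lam1 * p1)) (- lam2 * (- lam2 * p2)) lam1 lam2).
  assert (Hq : forall t, 0 < q t) by (intro; apply mix_pos; auto).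
  set (m := fun t => q' t / q t - b1 t).
  assert (Hm : forall t, above a t -> derivable_pt_lim m t ((q'' t * q t - q' t * q' t) / (q t)² - b2 t)).
  { intros t Ht. apply derivable_pt_lim_minus; auto.
    apply derivable_pt_lim_div; [apply mix_derive|apply mix_derive|specialize (Hq t); lra]. }
  apply (log_concave_of_exp a _ (fun t => ln (q t) + ln (s t)) m).
  - intros t Ht. rewrite exp_plus, !exp_ln; auto.
  - intros t Ht.
    apply (derivable_pt_lim_ext (plus_fct (comp ln q) (opp_fct (fun y => - ln (s y)))) _ t
             (/ q t * q' t + - b1 t)); [intro; unfold plus_fct, opp_fct, comp; ring|
                                         unfold m, Rdiv; ring|].
    apply derivable_pt_lim_plus.
    + apply derivable_pt_lim_comp; [apply mix_derive|apply derivable_pt_lim_ln; auto].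
    + apply derivable_pt_lim_opp; auto.
  - intros t1 t2 Ht1 Ht12.
    apply (nonincreasing_of_derive_nonpos m
             (fun t => (q'' t * q t - q' t * q' t) / (q t)² - b2 t) t1 t2 Ht12); intros t Ht.
    + apply Hm, (above_le a t1); [exact Ht1|lra].
    + assert (Hta : above a t) by (apply (above_le a t1); [exact Ht1|lra]).
      destruct (Hcond t Hta) as [Hb2pos Hc].
      unfold q, q', q''. rewrite (mix_log_curvature p1 p2 lam1 lam2 t Hp1 Hp2).
      assert (HC : 0 < cosh ((lam2 - lam1) / 2 * t + ln (sqrt (p1 / p2)))).
      { unfold cosh. pose proof (exp_pos ((lam2 - lam1) / 2 * t + ln (sqrt (p1 / p2)))).
        pose proof (exp_pos (- ((lam2 - lam1) / 2 * t + ln (sqrt (p1 / p2))))). lra. }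
      pose proof (Rsqr_div_le_of_div_sqrt_le ((lam2 - lam1) / 2) _ _ ltac:(lra) Hb2pos HC Hc).
      assert (Hq2 : (mix p1 p2 lam1 lam2 t)² <> 0)
        by (unfold Rsqr; pose proof (mix_pos p1 p2 lam1 lam2 t Hp1 Hp2); nra).
      set (K := ((lam2 - lam1) / 2 / cosh ((lam2 - lam1) / 2 * t + ln (sqrt (p1 / p2))))²) in *.
      replace (K * (mix p1 p2 lam1 lam2 t)² / (mix p1 p2 lam1 lam2 t)²) with K
        by (field; exact Hq2).
      lra.
Qed.

Theorem proposition2
  (a : lbound) (s s1 s2 b1 b2 : R -> R) (k : R -> R) (Lambda : R -> Prop)
  (lam1 lam2 p : R)
  (* s positive and twice differentiable on (a,oo) *)
  (Hspos : forall x, above a x -> 0 < s x)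
  (Hs1 : forall x, above a x -> derivable_pt_lim s x (s1 x))
  (Hs2 : forall x, above a x -> derivable_pt_lim s1 x (s2 x))
  (* b = -log s is convex; b1 = b', b2 = b'' on (a,oo) *)
  (Hbconv : convex_on a (fun x => - ln (s x)))
  (Hb1 : forall x, above a x -> derivable_pt_lim (fun y => - ln (s y)) x (b1 x))
  (Hb2 : forall x, above a x -> derivable_pt_lim b1 x (b2 x))
  (* Laplace transform L = e^k finite on the nonempty open interval Lambda *)
  (HLam : nonempty_open_interval Lambda)
  (Hk : forall lam, Lambda lam ->
          improper_int a (fun x => exp (- lam * x) * s x) (exp (k lam)))
  (Hl1 : Lambda lam1) (Hl2 : Lambda lam2) (Hl12 : lam1 < lam2)
  (Hp : 0 < p < 1)
  (Hcond : forall x, above a x ->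
     0 < b2 x /\
     let p1 := p * exp (- k lam1) in
     let p2 := (1 - p) * exp (- k lam2) in
     let c := (lam2 - lam1) / 2 in
     let d := ln (sqrt (p1 / p2)) in
     c / sqrt (b2 x) <= cosh (c * x + d)) :
  let f := fun x => (p * exp (- lam1 * x - k lam1)
                     + (1 - p) * exp (- lam2 * x - k lam2)) * s x in
  (forall x, above a x -> exists l, improper_int (Fin x) f l) /\
  (forall T : R -> R,
     (forall x, above a x -> improper_int (Fin x) f (T x)) ->
     forall x y, above a x -> x <= y -> f x / T x <= f y / T y).
Proof.
  intros f.
  set (p1 := p * exp (- k lam1)). set (p2 := (1 - p) * exp (- k lam2)).
  assert (Hp1 : 0 < p1) by (apply Rmult_lt_0_compat; [lra|apply exp_pos]).
  assert (Hp2 : 0 < p2) by (apply Rmult_lt_0_compat; [lra|apply exp_pos]).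
  assert (Hf : f = fun t => mix p1 p2 lam1 lam2 t * s t).
  { apply functional_extensionality. intro t.
    unfold f, mix, p1, p2, Rminus. rewrite !exp_plus. ring. }
  clearbody f. subst f.
  assert (f_pos : forall t, above a t -> 0 < mix p1 p2 lam1 lam2 t * s t)
    by (intros; apply Rmult_lt_0_compat; [apply mix_pos|]; auto).
  assert (f_cont : forall t, above a t -> continuity_pt (fun t => mix p1 p2 lam1 lam2 t * s t) t).
  { intros t Ht. apply (continuity_pt_mult (mix p1 p2 lam1 lam2) s).
    - apply derivable_continuous_pt. eexists. apply mix_derive.
    - apply derivable_continuous_pt. exists (s1 t). exact (Hs1 t Ht). }
  split.
  - intros x Hx. apply (improper_int_tail a _ x f_cont f_pos Hx (p1 * exp (k lam1) + p2 * exp (k lam2))).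
    replace (fun t => mix p1 p2 lam1 lam2 t * s t)
      with (fun t => p1 * (exp (- lam1 * t) * s t) + p2 * (exp (- lam2 * t) * s t))
      by (apply functional_extensionality; intro t; unfold mix; ring).
    apply improper_int_lincomb; auto.
  - intros T HT x y Hx Hxy.
    apply (hazard_rate_le a _ x f_cont f_pos Hx); auto.
    apply (mix_mul_log_concave a s b1 b2); auto; lra.
Qed.
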